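(* Let $F$ be a finite field, let $f,g,q\in F[\lambda]$ with $f,g$ relatively prime and $q=\sum_{i=0}^m q_i\lambda^i$ monic and irreducible, and let $Q=\mathfrak p_q(g,f):=\sum_{i=0}^m q_i f^i g^{m-i}$, assumed nonzero. Let $L$ be the splitting field of $q$ over $F$ and $\alpha\in L$ a root of $q$. Then $Q$ is irreducible over $F$ if and only if $f-\alpha g$ is irreducible over $L$.
   Context: $\mathfrak p_q(g,f)=g^{\deg q}q(f/g)$. *)

From HB Require Import structures.
From mathcomp Require Import all_boot all_order all_algebra all_field.
Set Implicit Arguments. Unset Strict Implicit. Unset Printing Implicit Defensive.
Import GRing.Theory.
Local Open Scope ring_scope.

(* p_q(g,f) = g^{deg q} q(f/g) = \sum_{i=0}^m q_i f^i g^{m-i}, m = deg q *)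
Definition pq (R : comNzRingType) (q g f : {poly R}) : {poly R} :=
  \sum_(i < size q) q`_i *: (f ^+ i * g ^+ ((size q).-1 - i)).

From HB Require Import structures.
From mathcomp Require Import all_boot all_order all_algebra all_field.
From mathcomp Require Import all_fingroup ring.
Set Implicit Arguments.
Unset Strict Implicit.
Unset Printing Implicit Defensive.

(* Over the splitting field L of q, Q = p_q(g,f) is the product over s in Gal(L/F) of the
   conjugates f - s(alpha) g of h = f - alpha g, i.e. Q is the Galois norm of h, and these
   conjugates are pairwise coprime since f and g are and the s(alpha) are distinct.  A proper
   factor d of h has a norm that is an F-rational proper factor of Q.  Conversely an F-factor
   P of Q is Galois-stable, so it shares a factor with h; if h is irreducible then h, hence
   every conjugate of h, hence Q, divides P. *)

Import GRing.Theory.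
Local Open Scope ring_scope.

Section Homogenization.
Variable R : comNzRingType.
Implicit Types (f g p : {poly R}) (n : nat).

(* g ^+ n * p.[f / g] for n >= deg p, so that [pq q g f] is its instance n = deg q. *)
Definition homog n g f p := \sum_(i < n.+1) p`_i *: (f ^+ i * g ^+ (n - i)).

Lemma pq_homog q g f : pq q g f = homog (size q).-1 g f q.
Proof.
rewrite /pq /homog; case sq: (size q) => [|n] //=.
by rewrite big_ord0 big_ord1 nth_default ?sq // scale0r.
Qed.

Lemma homogB n g f p1 p2 : homog n g f (p1 - p2) = homog n g f p1 - homog n g f p2.
Proof. by rewrite /homog -sumrB; apply: eq_bigr => i _; rewrite coefB scalerBl. Qed.

Lemma homogXM n g f p : homog n.+1 g f ('X * p) = f * homog n g f p.
Proof.
rewrite /homog big_ord_recl coefXM eqxx scale0r add0r mulr_sumr.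
by apply: eq_bigr => i _; rewrite coefXM /= subSS exprS -mulrA -scalerAr.
Qed.

Lemma homogZ n g f p c :
  (size p <= n.+1)%N -> homog n.+1 g f (c *: p) = (c *: g) * homog n g f p.
Proof.
move=> sp; rewrite /homog big_ord_recr /= coefZ (nth_default 0 sp) mulr0.
rewrite scale0r addr0 mulr_sumr; apply: eq_bigr => i _.
by rewrite coefZ subSn ?(leq_ord i) // exprS -!mul_polyC polyCM; ring.
Qed.

Lemma homog_prod_XsubC g f (s : seq R) :
  homog (size s) g f (\prod_(b <- s) ('X - b%:P)) = \prod_(b <- s) (f - b *: g).
Proof.
elim: s => [|b s IHs]; first by rewrite !big_nil /homog big_ord1 coef1 scale1r mulr1.
rewrite !big_cons mulrBl mul_polyC homogB homogXM homogZ ?size_prod_XsubC //.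
by rewrite IHs mulrBl.
Qed.

End Homogenization.

Lemma map_pq (F : fieldType) (R : comNzRingType) (phi : {rmorphism F -> R})
    (q g f : {poly F}) :
  map_poly phi (pq q g f) = pq (map_poly phi q) (map_poly phi g) (map_poly phi f).
Proof.
rewrite /pq rmorph_sum size_map_poly; apply: eq_bigr => i _.
by rewrite coef_map -!mul_polyC rmorphM /= map_polyC rmorphM !rmorphXn.
Qed.

Section PolyCoprime.
Variable K : fieldType.
Implicit Types (f g p : {poly K}).

Lemma coprimep_subZ f g a b :
  coprimep f g -> a != b -> coprimep (f - a *: g) (f - b *: g).
Proof.
move=> cfg ab.
have -> : f - b *: g = 1 * (f - a *: g) + (a - b) *: g.
  by rewrite mul1r scalerBl addrA subrK.
rewrite coprimep_addl_mul coprimepZr ?subr_eq0 // coprimep_sym.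
by rewrite -scaleNr addrC -mul_polyC coprimep_addl_mul coprimep_sym.
Qed.

Lemma dvdp_prod_pairwise_coprime (I : eqType) (s : seq I) (P : I -> {poly K}) p :
  uniq s -> (forall i, i \in s -> P i %| p) ->
  {in s &, forall i j, i != j -> coprimep (P i) (P j)} ->
  \prod_(i <- s) P i %| p.
Proof.
elim: s => [|i s IHs] /= ; first by rewrite big_nil dvd1p.
case/andP=> si us Pp cP; rewrite big_cons Gauss_dvdp.
  rewrite Pp ?mem_head // IHs // => [j sj|j k sj sk]; first by rewrite Pp ?inE ?sj ?orbT.
  by apply: cP; rewrite inE ?sj ?sk orbT.
rewrite big_seq; apply: (big_ind (coprimep (P i))) => [|u v|j sj].
- exact: coprimep1.
- by rewrite coprimepMr => -> ->.
- apply: cP; [exact: mem_head | by rewrite inE sj orbT |].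
  by apply: contraNneq si => ->.
Qed.

End PolyCoprime.

Section FiniteFieldGalois.
Variables (F : finFieldType) (L : splittingFieldType F).
Local Notation G := 'Gal((fullv : {vspace L}) / 1)%g.

Lemma galois1_fullv : galois 1 (fullv : {vspace L}).
Proof. exact/finField_galois/sub1v. Qed.

Lemma gal_map_inalg (p : {poly F}) s :
  s \in G -> map_poly s (map_poly (in_alg L) p) = map_poly (in_alg L) p.
Proof. by move=> sG; apply: (fixedPoly_gal (sub1v _) sG); apply/polyOver1P; exists p. Qed.

Lemma gal_fixed_polyOver1 (p : {poly L}) :
  (forall s, s \in G -> map_poly s p = p) -> p \is a polyOver 1%VS.
Proof.
move=> fixp; apply/polyOverP => i; rewrite -(galois_fixedField galois1_fullv).
by apply/fixedFieldP=> [|s sG]; rewrite ?memvf // -coef_map fixp.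
Qed.

Definition galNormp (d : {poly L}) := \prod_(s in G) map_poly s d.

Lemma gal_map_galNormp d t : t \in G -> map_poly t (galNormp d) = galNormp d.
Proof.
move=> tG; rewrite rmorph_prod [RHS](reindex_inj (mulIg t)) /=.
apply: eq_big => [s|s _]; first by rewrite groupMr.
by rewrite -map_poly_comp; apply: eq_map_poly => a; rewrite /= galM ?memvf.
Qed.

Lemma galNormp_polyOver1 d : galNormp d \is a polyOver 1%VS.
Proof. exact/gal_fixed_polyOver1/gal_map_galNormp. Qed.

Lemma galNormp_dvdp d h : d %| h -> galNormp d %| galNormp h.
Proof.
move=> dh; apply: (big_ind2 (fun a b : {poly L} => a %| b)) => [|a1 a2 b1 b2|s _].
- exact: dvdpp.
- exact: dvdp_mul.
- by rewrite dvdp_map.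
Qed.

Lemma size_galNormp d : d != 0 -> size (galNormp d) = (#|G| * (size d).-1).+1.
Proof.
move=> d0; rewrite size_prod => [|s _]; last by rewrite map_poly_eq0.
under eq_bigr => s _ do rewrite size_map_poly.
rewrite sum_nat_const; move: d0; rewrite -size_poly_gt0.
by case: (size d) => // n _; rewrite mulnS -addnS addnC addnK.
Qed.

End FiniteFieldGalois.

Arguments galNormp {F L} d.

Section GaloisOrbitOfRoot.
Variables (F : finFieldType) (L : splittingFieldType F) (q : {poly F}) (alpha : L).
Hypotheses (q_monic : q \is monic) (q_irr : irreducible_poly q).
Hypothesis q_splits : splittingFieldFor 1%VS (map_poly (in_alg L) q) fullv.
Hypothesis q_alpha : root (map_poly (in_alg L) q) alpha.
Local Notation G := 'Gal((fullv : {vspace L}) / 1)%g.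

Lemma minPoly1_root : minPoly 1 alpha = map_poly (in_alg L) q.
Proof.
have /polyOver1P[P DP] := minPolyOver 1 alpha.
have P_monic : P \is monic by rewrite -(map_monic (in_alg L)) -DP monic_minPoly.
have sP : size P != 1%N.
  by rewrite -(size_map_poly (in_alg L)) -DP size_minPoly.
have Pq : P %| q.
  by rewrite -(dvdp_map (in_alg L)) -DP minPoly_dvdp //; apply/polyOver1P; exists q.
by move: (apply_irredp q_irr sP Pq); rewrite eqp_monic // => /eqP <-.
Qed.

Lemma fullv_Fadjoin_root : (fullv : {vspace L}) = <<1; alpha>>%VS.
Proof.
case: q_splits => rs Drs full_rs; apply/eqP; rewrite eqEsubv subvf andbT -full_rs.
have /and3P[_ _ normalA] : galois 1 <<1; alpha>>%AS.
  exact/finField_galois/subv_adjoin.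
have [r /allP rA Dr] := normalFieldP normalA alpha (memv_adjoin 1 alpha).
apply/Fadjoin_seqP; split=> [|b brs]; first exact: subv_adjoin.
by apply: rA; rewrite -root_prod_XsubC -Dr minPoly1_root (eqp_root Drs) root_prod_XsubC.
Qed.

Lemma gal_eq_at_root s t : s \in G -> t \in G -> s alpha = t alpha -> s = t.
Proof.
move=> sG tG st; apply/eqP/gal_eqP => a _.
have /Fadjoin_polyP[p p1 ->] : a \in <<1; alpha>>%VS by rewrite -fullv_Fadjoin_root memvf.
by rewrite -!horner_map /= !(fixedPoly_gal (sub1v _) _ p1) // st.
Qed.

Lemma map_q_prod_gal : map_poly (in_alg L) q = \prod_(s in G) ('X - (s alpha)%:P).
Proof.
have [r [rG /map_uniq r_uniq Dr]] :=
  galois_factors (sub1v _) (@galois1_fullv F L) alpha (memvf alpha).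
have size_r : #|G| = size r.
  rewrite -(galois_dim (@galois1_fullv F L)) dimv1 divn1.
  change (\dim (fullv : {vspace L}) = size r).
  rewrite fullv_Fadjoin_root dim_Fadjoin dimv1 muln1; apply/eqP.
  by rewrite -eqSS -size_minPoly Dr size_prod_XsubC size_map.
have r_enum : perm_eq r (enum G).
  apply: uniq_perm => //; first exact: enum_uniq.
  have rGs : {subset r <= enum G} by move=> s rs; rewrite mem_enum (subsetP rG).
  by have [] := uniq_min_size r_uniq rGs; rewrite -?cardE -?size_r.
by rewrite -minPoly1_root Dr big_map (perm_big _ r_enum) big_enum.
Qed.

End GaloisOrbitOfRoot.

Section RootFactor.
Variables (F : finFieldType) (f g q : {poly F}) (L : splittingFieldType F) (alpha : L).
Hypotheses (fg_coprime : coprimep f g) (q_monic : q \is monic).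
Hypotheses (q_irr : irreducible_poly q) (Q_neq0 : pq q g f != 0).
Hypothesis q_splits : splittingFieldFor 1%VS (map_poly (in_alg L) q) fullv.
Hypothesis q_alpha : root (map_poly (in_alg L) q) alpha.
Local Notation G := 'Gal((fullv : {vspace L}) / 1)%g.
Local Notation Q := (pq q g f).
Local Notation "p ^L" := (map_poly (in_alg L) p) (format "p ^L").
Local Notation h := (f^L - alpha *: g^L).

Lemma gal_map_root_factor s : s \in G -> map_poly s h = f^L - s alpha *: g^L.
Proof.
by move=> sG; rewrite -!mul_polyC rmorphB rmorphM /= map_polyC /= !gal_map_inalg.
Qed.

Lemma map_pq_galNormp : Q^L = galNormp h.
Proof.
rewrite map_pq pq_homog (map_q_prod_gal q_monic q_irr q_splits q_alpha) -big_enum.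
rewrite -(big_map (fun s : gal_of fullv => s alpha) xpredT (fun b => 'X - b%:P)).
rewrite size_prod_XsubC homog_prod_XsubC big_map big_enum.
by apply: eq_bigr => s sG; rewrite gal_map_root_factor.
Qed.

Lemma root_factor_neq0 : h != 0.
Proof.
apply: contra Q_neq0 => /eqP h0; rewrite -(map_poly_eq0 (in_alg L)) map_pq_galNormp.
by rewrite /galNormp (bigD1 1%g) ?group1 //= h0 rmorph0 mul0r.
Qed.

Lemma size_pq_root_factor : size Q = (#|G| * (size h).-1).+1.
Proof.
by rewrite -(size_map_poly (in_alg L)) map_pq_galNormp size_galNormp ?root_factor_neq0.
Qed.

Lemma irreducible_root_factor_of_pq : irreducible_poly Q -> irreducible_poly h.
Proof.
case=> sQ Q_irr; have G_gt0 := cardG_gt0 G; split.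
  by move: sQ; rewrite size_pq_root_factor; case: (size h) => [|[|]] //=; rewrite muln0.
move=> d sd dh.
have d0 : d != 0 by apply: contraTneq dh => ->; rewrite dvd0p root_factor_neq0.
have /polyOver1P[P DP] := galNormp_polyOver1 d.
have sP : size P = (#|G| * (size d).-1).+1.
  by rewrite -(size_map_poly (in_alg L)) -DP size_galNormp.
have sP1 : size P != 1%N.
  rewrite sP eqSS muln_eq0 negb_or -lt0n G_gt0 -lt0n.
  by move: sd d0; rewrite -size_poly_gt0; case: (size d) => [|[|]].
have PQ : P %| Q by rewrite -(dvdp_map (in_alg L)) -DP map_pq_galNormp galNormp_dvdp.
move: (eqp_size (Q_irr P sP1 PQ)); rewrite sP size_pq_root_factor.
move/eqP; rewrite eqSS eqn_pmul2l // => /eqP size_dh.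
rewrite -dvdp_size_eqp //; apply/eqP.
by rewrite -[size d]prednK ?size_poly_gt0 // size_dh prednK // size_poly_gt0 root_factor_neq0.
Qed.

Lemma irreducible_pq_of_root_factor : irreducible_poly h -> irreducible_poly Q.
Proof.
case=> sh h_irr; have G_gt0 := cardG_gt0 G; split.
  by rewrite size_pq_root_factor ltnS muln_gt0 G_gt0; case: (size h) sh => [|[|]].
move=> P sP PQ.
have PL_fixed s : s \in G -> map_poly s P^L = P^L by apply: gal_map_inalg.
have h_PL : h %| P^L.
  have [h_PL_coprime|] := boolP (coprimep h P^L); last first.
    by move=> /(h_irr _)/(_ (dvdp_gcdl _ _)) hgcd; rewrite -(eqp_dvdl _ hgcd) dvdp_gcdr.
  have : coprimep P^L (galNormp h).
    apply: (big_ind (coprimep P^L)) => [|u v|s sG]; rewrite ?coprimep1 ?coprimepMr //.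
      by move=> -> ->.
    by rewrite -(PL_fixed s sG) coprimep_map coprimep_sym.
  have PQL : P^L %| Q^L by rewrite dvdp_map.
  rewrite -map_pq_galNormp => /(coprimep_dvdl PQL).
  by rewrite coprimepp size_map_poly (negbTE sP).
have QP : Q^L %| P^L.
  rewrite map_pq_galNormp /galNormp -big_enum; apply: dvdp_prod_pairwise_coprime.
  - exact: enum_uniq.
  - by move=> s; rewrite mem_enum => sG; rewrite -(PL_fixed s sG) dvdp_map.
  move=> s t; rewrite !mem_enum => sG tG st.
  rewrite !gal_map_root_factor //; apply: coprimep_subZ; first by rewrite coprimep_map.
  by apply: contra st => /eqP/(gal_eq_at_root q_monic q_irr q_splits q_alpha sG tG)->.
by rewrite /eqp PQ -(dvdp_map (in_alg L)).
Qed.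

End RootFactor.

Theorem mainTheorem5 (F : finFieldType) (f g q : {poly F})
  (L : fieldExtType F) (alpha : L) :
  coprimep f g ->
  q \is monic -> irreducible_poly q ->
  pq q g f != 0 ->
  splittingFieldFor 1%VS (map_poly (in_alg L) q) fullv ->
  root (map_poly (in_alg L) q) alpha ->
  (irreducible_poly (pq q g f) <->
   irreducible_poly (map_poly (in_alg L) f - alpha *: map_poly (in_alg L) g)).
Proof.
pose L' := FinSplittingFieldType F L.
move=> fg_coprime q_monic q_irr Q_neq0 q_splits q_alpha; split.
- exact: (@irreducible_root_factor_of_pq F f g q L' alpha).
- exact: (@irreducible_pq_of_root_factor F f g q L' alpha).
Qed.
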